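(* Let $G$ be a primitive strongly regular graph with parameters $(v,k,\lambda,\mu)$. Then $|\lambda-\mu|<v^{3/4}$.
   Context: A graph is strongly regular with parameters $(v,k,\lambda,\mu)$ if it is a $k$-regular graph on $v$ vertices such that each edge lies in exactly $\lambda$ triangles and any two distinct non-adjacent vertices have exactly $\mu$ common neighbours; complete and edgeless graphs are excluded. A strongly regular graph is primitive if both it and its complement are connected. *)

From mathcomp Require Import all_boot all_order all_algebra.
From mathcomp Require Import all_classical all_reals all_analysis.
Set Implicit Arguments. Unset Strict Implicit. Unset Printing Implicit Defensive.

Definition simple_graph (T : finType) (e : rel T) : Prop :=
  symmetric e /\ irreflexive e.

Definition common_nbrs (T : finType) (e : rel T) (x y : T) : nat :=
  #|[set z | e x z && e y z]|.

(* Strongly regular graph with parameters (v,k,lambda,mu); complete and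
   edgeless graphs are excluded. *)
Definition srg (T : finType) (e : rel T) (v k lam mu : nat) : Prop :=
  [/\ simple_graph e, #|T| = v, (forall x : T, #|[set y | e x y]| = k) &
      [/\ 
      (forall x y : T, x != y -> e x y -> common_nbrs e x y = lam),
        (forall x y : T, x != y -> ~~ e x y -> common_nbrs e x y = mu),
        (exists x y : T, e x y) &
        (exists x y : T, (x != y) && ~~ e x y)]].

Definition compl_rel (T : finType) (e : rel T) : rel T :=
  fun x y => (x != y) && ~~ e x y.

Definition connected_graph (T : finType) (e : rel T) : Prop :=
  forall x y : T, connect e x y.

Definition primitive_srg (T : finType) (e : rel T) (v k lam mu : nat) : Prop :=
  [/\ srg e v k lam mu, connected_graph e & connected_graph (compl_rel e)].

From mathcomp Require Import all_boot all_order all_algebra.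
From mathcomp Require Import all_classical all_reals all_analysis.
From mathcomp Require Import ring lra.
Set Implicit Arguments. Unset Strict Implicit. Unset Printing Implicit Defensive.
Import Order.TTheory GRing.Theory Num.Theory.
Local Open Scope ring_scope.

(* The adjacency matrix A satisfies A^2 = (k - mu) I + (lam - mu) A + mu J, so
   besides k it has two eigenvalues, the roots th > 0 > th' of
   x^2 - (lam - mu) x - (k - mu) (mu < k as the complement is connected).
   The projection onto the th-eigenspace is a combination of I, A and J whose
   off-diagonal entries take two values and whose diagonal entries take a third
   one (this uses th' <> 0, -1, where th' <> -1 because the graph is not a union
   of cliques), so the rank of its entrywise square gives the absolute bound
   v <= (f + 1)^2 for the multiplicity f of th.  Computing tr A^2 spectrally
   gives f th^2 <= k (v - k) <= v^2 / 4, hence th^4 <= v^4 / (16 f^2) < v^3,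
   and likewise for th'.  Finally |lam - mu| = |th + th'| <= max (th, -th'). *)

Section Rank.
Variable F : fieldType.

Lemma mxrank_idempotent n (E : 'M[F]_n) : E *m E = E -> (\rank E)%:R = \tr E.
Proof.
move=> EE; set B := row_base E; set C := E *m pinvmx B.
have CB : C *m B = E by rewrite mulmxKpV // eq_row_base.
have BE : B *m E = B.
  have /submxP[D ->] : (B <= E)%MS by rewrite eq_row_base.
  by rewrite -mulmxA EE.
have BC : B *m C = 1%:M.
  apply: (row_free_inj (row_base_free E)).
  by rewrite -/B -mulmxA CB BE mul1mx.
by rewrite -[in RHS]CB mxtrace_mulC BC mxtrace1.
Qed.

Lemma mxrank_hadamard_sqr_mul m r n (C : 'M[F]_(m, r)) (B : 'M[F]_(r, n)) :
  (\rank (\matrix_(i, j) ((C *m B) i j ^+ 2)) <= r * r)%N.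
Proof.
pose P : 'M[F]_(m, #|{: 'I_r * 'I_r}|) :=
  \matrix_(i, t) (C i (enum_val t).1 * C i (enum_val t).2).
pose Q : 'M[F]_(#|{: 'I_r * 'I_r}|, n) :=
  \matrix_(t, j) (B (enum_val t).1 j * B (enum_val t).2 j).
have -> : \matrix_(i, j) ((C *m B) i j ^+ 2) = P *m Q.
  apply/matrixP => i j; rewrite !mxE expr2 mulr_suml.
  under eq_bigr do rewrite mulr_sumr.
  rewrite pair_big (reindex (fun t : 'I_#|{: 'I_r * 'I_r}| => enum_val t)) /=.
    by apply: eq_bigr => t _; rewrite !mxE; ring.
  exact: onW_bij _ (enum_val_bij _).
apply: leq_trans (mxrankM_maxl _ _) _.
by apply: leq_trans (rank_leq_col _) _; rewrite card_prod card_ord.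
Qed.

Lemma mxrank_hadamard_sqr m n (E : 'M[F]_(m, n)) :
  (\rank (\matrix_(i, j) (E i j ^+ 2)) <= \rank E * \rank E)%N.
Proof.
have := mxrank_hadamard_sqr_mul (E *m pinvmx (row_base E)) (row_base E).
by rewrite mulmxKpV // eq_row_base.
Qed.

Lemma two_valued_absolute_bound n (E : 'M[F]_n) (a b : F) :
  (forall i j, i != j -> (E i j == a) || (E i j == b)) ->
  (forall i, (E i i != a) && (E i i != b)) ->
  (n <= (\rank E).+1 ^ 2)%N.
Proof.
move=> Eoff Ediag.
(* N = (E - a J) o (E - b J) = E o E - (a + b) E + a b J is invertible diagonal. *)
pose N := \matrix_(i, j) ((E i j - a) * (E i j - b)).
have rankN : \rank N = n.
  apply: mxrank_unit.
  have -> : N = diag_mx (\row_i ((E i i - a) * (E i i - b))).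
    apply/matrixP => i j; rewrite !mxE.
    case: eqVneq => [->|ij]; first by rewrite mulr1n.
    by rewrite mulr0n; case/orP: (Eoff i j ij) => /eqP->; rewrite subrr ?mulr0 ?mul0r.
  rewrite unitmxE det_diag unitfE prodf_seq_neq0.
  apply/allP => i _ /=; rewrite mxE.
  by case/andP: (Ediag i) => Ea Eb; rewrite mulf_neq0 // subr_eq0.
pose u : 'cV[F]_n := const_mx 1; pose w : 'rV[F]_n := const_mx 1.
have splitN : N = \matrix_(i, j) (E i j ^+ 2) + (- (a + b)) *: E + (a * b) *: (u *m w).
  by apply/matrixP => i j; rewrite !mxE big_ord1 !mxE; ring.
have rankZE : (\rank ((- (a + b)) *: E) <= \rank E)%N by apply/mxrankS/scalemx_sub.
have rank_uw : (\rank ((a * b) *: (u *m w)) <= 1)%N.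
  apply: leq_trans (mxrankS (scalemx_sub (a * b) (submx_refl (u *m w)))) _.
  exact: leq_trans (mxrankM_maxl u w) (rank_leq_col u).
apply: (@leq_trans (\rank N)); first by rewrite rankN.
rewrite splitN; apply: leq_trans (mxrank_add _ _) _.
apply: leq_trans (leq_add (mxrank_add _ _) rank_uw) _.
apply: leq_trans (leq_add (leq_add (mxrank_hadamard_sqr E) rankZE) (leqnn 1)) _.
by rewrite -mulnn mulSnr mulnSr addn1 -addnS leq_add2r leq_addr.
Qed.
End Rank.

Section BoseMesner.
Variables (F : fieldType) (n : nat) (A : 'M[F]_n) (k l m : F).
Local Notation J := (const_mx 1 : 'M[F]_n).

Lemma const1mx_sqr : J *m J = n%:R *: J.
Proof.
apply/matrixP => i j; rewrite !mxE.
under eq_bigr do rewrite !mxE mulr1.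
by rewrite sumr_const card_ord mulr1.
Qed.

Hypothesis A2 : A *m A = (k - m) *: 1%:M + (l - m) *: A + m *: J.
Hypothesis AJ : A *m J = k *: J.
Hypothesis JA : J *m A = k *: J.

Definition bose_mesner (p q r : F) : 'M[F]_n := p *: 1%:M + q *: A + r *: J.

Lemma bose_mesner_mul p1 q1 r1 p2 q2 r2 :
  bose_mesner p1 q1 r1 *m bose_mesner p2 q2 r2 =
  bose_mesner (p1 * p2 + q1 * q2 * (k - m))
       (p1 * q2 + q1 * p2 + q1 * q2 * (l - m))
       (p1 * r2 + r1 * p2 + q1 * q2 * m + q1 * r2 * k + r1 * q2 * k
         + r1 * r2 * n%:R).
Proof.
rewrite /bose_mesner !mulmxDl !mulmxDr -!scalemxAl -!scalemxAr.
rewrite !mul1mx !mulmx1 A2 AJ JA const1mx_sqr.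
by apply/matrixP => i j; rewrite !mxE; ring.
Qed.

Lemma srg_parameter_identity : (0 < n)%N -> k * (k - l - 1) = (n%:R - k - 1) * m.
Proof.
move=> n_gt0; have := mulmxA A A J.
rewrite A2 AJ -scalemxAr AJ !mulmxDl -!scalemxAl mul1mx AJ const1mx_sqr !scalerA.
move/matrixP/(_ (Ordinal n_gt0) (Ordinal n_gt0)); rewrite !mxE !mulr1 => H.
apply/eqP; rewrite -subr_eq0 -[X in _ == X](subrr (k * k)) {2}H; apply/eqP; ring.
Qed.

(* E_th = (A - th' I - ((k - th') / n) J) / (th - th'). *)
Definition eigenproj (th th' : F) : 'M[F]_n :=
  bose_mesner (- th' / (th - th')) (th - th')^-1 (- ((k - th') / n%:R) / (th - th')).

Section Eigenvalues.
Variables th th' : F.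
Hypotheses (n_neq0 : n%:R != 0 :> F) (th_neq : th != th').
Hypotheses (th_add : th + th' = l - m) (th_mul : th * th' = m - k).

Lemma eigenproj_idem : eigenproj th th' *m eigenproj th th' = eigenproj th th'.
Proof.
have d_neq0 : th - th' != 0 by rewrite subr_eq0.
have n_gt0 : (0 < n)%N by rewrite lt0n; apply: contraNneq n_neq0 => ->.
have nm : n%:R * m = (k - th) * (k - th').
  apply/eqP; rewrite -subr_eq0; apply/eqP.
  transitivity ((n%:R - k - 1) * m - k * (k - l - 1)).
    have -> : (k - th) * (k - th') = k ^+ 2 - k * (th + th') + th * th' by ring.
    by rewrite th_add th_mul; ring.
  by rewrite srg_parameter_identity // subrr.
rewrite /eigenproj bose_mesner_mul; congr bose_mesner.
- have -> : k - m = - (th * th') by rewrite th_mul; ring.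
  by field.
- by rewrite -th_add; field.
- have -> : m = (k - th) * (k - th') / n%:R by rewrite -nm [_ * m]mulrC mulfK.
  by field; rewrite n_neq0 d_neq0.
Qed.

Lemma mxtrace_eigenproj : \tr A = 0 ->
  \tr (eigenproj th th') = - (th' * n%:R + k - th') / (th - th').
Proof.
move=> trA; have d_neq0 : th - th' != 0 by rewrite subr_eq0.
rewrite /eigenproj /bose_mesner !mxtraceD !mxtraceZ trA mxtrace1.
have -> : \tr J = n%:R.
  by rewrite /mxtrace; under eq_bigr do rewrite mxE; rewrite sumr_const card_ord.
by field; rewrite n_neq0 d_neq0.
Qed.

Lemma eigenproj_absolute_bound :
  (forall i, A i i = 0) -> (forall i j, i != j -> (A i j == 0) || (A i j == 1)) ->
  th' != 0 -> th' != -1 ->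
  (n <= (\rank (eigenproj th th')).+1 ^ 2)%N.
Proof.
move=> Adiag Aoff th'_neq0 th'_neqN1.
have d_neq0 : th - th' != 0 by rewrite subr_eq0.
set c := - ((k - th') / n%:R) / (th - th').
have E_entry i j : eigenproj th th' i j =
    - th' / (th - th') * (i == j)%:R + (th - th')^-1 * A i j + c.
  by rewrite /eigenproj /bose_mesner !mxE mulr1.
apply: (two_valued_absolute_bound (a := (th - th')^-1 + c) (b := c)).
- move=> i j ij; rewrite E_entry (negbTE ij) mulr0 add0r.
  by case/orP: (Aoff i j ij) => /eqP->; rewrite ?mulr0 ?mulr1 ?add0r eqxx ?orbT.
move=> i; rewrite E_entry Adiag eqxx mulr1 mulr0 addr0 -{4}[c]add0r.
rewrite !(inj_eq (addIr c)) -[X in _ != X](mul1r (th - th')^-1).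
rewrite (inj_eq (mulIf (invr_neq0 d_neq0))).
by rewrite eqr_oppLR th'_neqN1 mulf_neq0 ?oppr_eq0 ?invr_eq0.
Qed.

End Eigenvalues.

(* The spectral evaluation of tr (A ^+ 2) = n k. *)
Lemma eigenproj_rank_sqr_sum th th' :
  \tr A = 0 -> n%:R != 0 :> F -> th != th' -> th + th' = l - m -> th * th' = m - k ->
  (\rank (eigenproj th th'))%:R * th ^+ 2 + (\rank (eigenproj th' th))%:R * th' ^+ 2
    = k * (n%:R - k).
Proof.
move=> trA n_neq0 th_neq th_add th_mul.
have th'_neq : th' != th by rewrite eq_sym.
have d_neq0 : th - th' != 0 by rewrite subr_eq0.
have d'_neq0 : th' - th != 0 by rewrite subr_eq0.
have n_gt0 : (0 < n)%N by rewrite lt0n; apply: contraNneq n_neq0 => ->.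
rewrite !mxrank_idempotent ?eigenproj_idem // ?(addrC th') ?(mulrC th') //.
rewrite !mxtrace_eigenproj //.
transitivity (- (th * th') * (n%:R - 1) - k * (th + th')).
  by field; rewrite d_neq0 d'_neq0.
apply/eqP; rewrite -subr_eq0 th_add th_mul; apply/eqP.
transitivity (k * (k - l - 1) - (n%:R - k - 1) * m); first by ring.
by rewrite srg_parameter_identity // subrr.
Qed.
End BoseMesner.

Lemma exists_roots_opposite_sign (R : rcfType) (s p : R) : p < 0 ->
  exists th th' : R, [/\ th + th' = s, th * th' = p, th' < 0 & 0 < th].
Proof.
move=> p_lt0; set D := s ^+ 2 - 4 * p.
have D_gt0 : 0 < D by rewrite /D; nra.
have sqrtD2 : Num.sqrt D ^+ 2 = D by rewrite sqr_sqrtr // ltW.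
have sqrtD_gt0 : 0 < Num.sqrt D by rewrite sqrtr_gt0.
have s_lt : `|s| < Num.sqrt D.
  rewrite -(ltr_pXn2r (n := 2)) ?nnegrE ?normr_ge0 ?ltW // sqrtD2.
  by rewrite real_normK ?num_real // /D; lra.
exists ((s + Num.sqrt D) / 2), ((s - Num.sqrt D) / 2); split.
- by field.
- transitivity ((s ^+ 2 - Num.sqrt D ^+ 2) / 4); first by field.
  by rewrite sqrtD2 /D; field.
- by move: s_lt; rewrite ltr_norml; lra.
- by move: s_lt; rewrite ltr_norml; lra.
Qed.

Lemma eigenvalue_pow4_lt (R : realFieldType) (n f : nat) (k x : R) :
  (2 <= n)%N -> (n <= f.+1 ^ 2)%N -> f%:R * x ^+ 2 <= k * (n%:R - k) ->
  x ^+ 4 < n%:R ^+ 3.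
Proof.
move=> n_ge2 n_le fx.
have n_gt0 : 0 < n%:R :> R by rewrite ltr0n (leq_trans _ n_ge2).
have f_ge1 : 1 <= f%:R :> R.
  by rewrite ler1n lt0n; apply: contraTneq n_le => ->; rewrite -ltnNge.
have n_le4f2 : n%:R <= 4 * f%:R ^+ 2 :> R.
  apply: le_trans (_ : (f%:R + 1) ^+ 2 <= _); last by nra.
  by rewrite natr1 -natrX ler_nat.
have fx_le : 4 * (f%:R * x ^+ 2) <= n%:R ^+ 2.
  by have := sqr_ge0 (n%:R - 2 * k); nra.
have x4_ge0 : 0 <= x ^+ 4 by rewrite exprn_even_ge0.
have bound : 4 * n%:R * x ^+ 4 <= n%:R * n%:R ^+ 3.
  apply: le_trans (_ : (4 * (f%:R * x ^+ 2)) ^+ 2 <= _).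
    rewrite (_ : (4 * _) ^+ 2 = 4 * (4 * f%:R ^+ 2) * x ^+ 4); last by ring.
    by rewrite ler_wpM2r // ler_pM2l.
  rewrite (_ : n%:R * n%:R ^+ 3 = (n%:R ^+ 2) ^+ 2); last by ring.
  by rewrite lerXn2r ?nnegrE //; nra.
rewrite -(ltr_pM2l n_gt0).
have := mulr_ge0 (ltW n_gt0) x4_ge0; have := mulr_gt0 n_gt0 (exprn_gt0 3 n_gt0).
lra.
Qed.

Section SrgBound.
Variables (R : rcfType) (n : nat) (A : 'M[R]_n) (k l m : R).
Local Notation J := (const_mx 1 : 'M[R]_n).
Hypothesis A2 : A *m A = (k - m) *: 1%:M + (l - m) *: A + m *: J.
Hypothesis AJ : A *m J = k *: J.
Hypothesis JA : J *m A = k *: J.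
Hypothesis Adiag : forall i, A i i = 0.
Hypothesis Aoff : forall i j, i != j -> (A i j == 0) || (A i j == 1).
Hypothesis n_ge2 : (2 <= n)%N.
Hypothesis m_lt_k : m < k.

Lemma srg_eigenvalue_pow4_lt th th' :
  th + th' = l - m -> th * th' = m - k -> th' != -1 -> th ^+ 4 < n%:R ^+ 3.
Proof.
move=> th_add th_mul th'_neqN1.
have th_mul_lt0 : th * th' < 0 by rewrite th_mul subr_lt0.
have th_neq : th != th'.
  by apply: contraTneq th_mul_lt0 => ->; rewrite -leNgt -expr2 sqr_ge0.
have th'_neq0 : th' != 0 by apply: contraTneq th_mul_lt0 => ->; rewrite mulr0 ltxx.
have n_neq0 : n%:R != 0 :> R by rewrite pnatr_eq0 -lt0n (leq_trans _ n_ge2).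
have trA : \tr A = 0 by apply: big1 => i _; rewrite Adiag.
apply: (eigenvalue_pow4_lt (f := \rank (eigenproj A k th th')) (k := k) n_ge2).
  exact: eigenproj_absolute_bound th_neq Adiag Aoff th'_neq0 th'_neqN1.
have := eigenproj_rank_sqr_sum A2 AJ JA trA n_neq0 th_neq th_add th_mul.
have := mulr_ge0 (ler0n R (\rank (eigenproj A k th' th))) (sqr_ge0 th').
lra.
Qed.

Lemma srg_adjacency_bound : k != l + 1 -> `|l - m| ^+ 4 < n%:R ^+ 3.
Proof.
move=> k_neq.
have [th [th' [th_add th_mul th'_lt0 th_gt0]]] :
    exists th th' : R, [/\ th + th' = l - m, th * th' = m - k, th' < 0 & 0 < th].
  by apply: exists_roots_opposite_sign; rewrite subr_lt0.
have th'_neqN1 : th' != -1.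
  by apply: contra_neq k_neq => th'E; move: th_add th_mul; rewrite th'E; lra.
have th_neqN1 : th != -1 by rewrite gt_eqF // (lt_trans _ th_gt0) // oppr_lt0.
have th_pow4 := srg_eigenvalue_pow4_lt th_add th_mul th'_neqN1.
have th'_pow4 := srg_eigenvalue_pow4_lt
  (etrans (addrC th' th) th_add) (etrans (mulrC th' th) th_mul) th_neqN1.
rewrite -th_add; have [th_add_ge0|th_add_lt0] := leP 0 (th + th').
  rewrite ger0_norm //; apply: le_lt_trans th_pow4.
  by rewrite lerXn2r ?nnegrE //; lra.
rewrite ltr0_norm //; apply: le_lt_trans th'_pow4.
rewrite (_ : th' ^+ 4 = (- th') ^+ 4); last by ring.
by rewrite lerXn2r ?nnegrE //; lra.
Qed.
End SrgBound.

Lemma connect_invariant (T : finType) (r : rel T) (U : eqType) (f : T -> U) :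
  (forall x y, r x y -> f x = f y) -> forall x y, connect r x y -> f x = f y.
Proof.
move=> f_edge x y xy.
have closed_fx : fingraph.closed r [pred z | f z == f x].
  by move=> u w /f_edge uw; rewrite !inE uw.
by have := closed_connect closed_fx xy; rewrite !inE eqxx => /esym/eqP.
Qed.

Section SrgCombinatorics.
Variables (T : finType) (e : rel T) (v k lam mu : nat).
Hypothesis G : srg e v k lam mu.
Local Notation N x := [set y | e x y].

Lemma srg_card_ge2 : (2 <= #|T|)%N.
Proof.
case: G => _ _ _ [_ _ _ [x [y /andP[xy _]]]].
by rewrite (cardD1 x) (cardD1 y) !inE eq_sym xy.
Qed.

Lemma common_nbrsE x y : common_nbrs e x y = #|N x :&: N y|.
Proof. by apply: eq_card => z; rewrite !inE. Qed.

Lemma srg_nbhd_eq_compl : mu = k -> forall x y, compl_rel e x y -> N x = N y.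
Proof.
case: G => _ _ Nk [_ Gmu _ _] mu_k x y /andP[xy nexy].
have cardI : #|N x :&: N y| = k by rewrite -common_nbrsE Gmu.
have NIx : N x :&: N y = N x.
  by apply/eqP; rewrite eqEcard subsetIl cardI Nk leqnn.
have NIy : N x :&: N y = N y.
  by apply/eqP; rewrite eqEcard subsetIr cardI Nk leqnn.
by rewrite -NIx NIy.
Qed.

Lemma srg_mu_lt_k : connected_graph (compl_rel e) -> (mu < k)%N.
Proof.
move=> conn; case: (G) => [[_ irr] _ Nk [_ Gmu [x0 [y0 exy0]] [x1 [y1 /andP[xy1 nexy1]]]]].
have mu_le_k : (mu <= k)%N.
  by rewrite -(Gmu _ _ xy1 nexy1) -(Nk x1) common_nbrsE subset_leq_card ?subsetIl.
rewrite ltn_neqAle mu_le_k andbT; apply/eqP => mu_k.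
have := connect_invariant (f := fun x => N x) (srg_nbhd_eq_compl mu_k) (conn x0 y0).
by move/setP/(_ y0); rewrite !inE exy0 irr.
Qed.

Lemma srg_closed_nbhd_sub x y : k = lam.+1 -> e x y -> x |: N x \subset y |: N y.
Proof.
case: G => [[sym irr] _ Nk [Glam _ _ _]] k_lam exy.
have xy : x != y by apply: contraTneq exy => ->; rewrite irr.
have cardD : #|N x :\ y| = lam.
  by have := cardsD1 y (N x); rewrite Nk inE exy k_lam add1n => -[->].
have NI_sub : N x :&: N y \subset N x :\ y.
  apply/fintype.subsetP => z; rewrite !inE => /andP[exz eyz]; rewrite exz andbT.
  by apply: contraTneq eyz => ->; rewrite irr.
have NxD : N x :\ y = N x :&: N y.
  by apply/esym/eqP; rewrite eqEcard NI_sub cardD -common_nbrsE (Glam _ _ xy exy) leqnn.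
apply/fintype.subsetP => z; rewrite !inE => /orP[/eqP-> | exz].
  by rewrite sym exy orbT.
have [//|zy] := eqVneq z y.
have : z \in N x :\ y by rewrite !inE zy exz.
by rewrite NxD !inE => /andP[_ ->]; rewrite orbT.
Qed.

Lemma srg_k_neq_lam_succ : connected_graph e -> k != lam.+1.
Proof.
move=> conn; case: (G) => [[sym _] _ _ [_ _ _ [x1 [y1 /andP[xy1 nexy1]]]]].
apply/eqP => k_lam.
have closed_nbhd_eq x y : e x y -> x |: N x = y |: N y.
  by move=> exy; apply/eqP; rewrite finset.eqEsubset !srg_closed_nbhd_sub // sym.
have := connect_invariant (f := fun x => x |: N x) closed_nbhd_eq (conn x1 y1).
by move/setP/(_ y1); rewrite !inE eqxx eq_sym (negbTE xy1) (negbTE nexy1).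
Qed.

End SrgCombinatorics.

Lemma sum_nat_of_bool (T : finType) (R : pzSemiRingType) (P : pred T) :
  \sum_(z : T) (P z)%:R = #|[set z | P z]|%:R :> R.
Proof. by rewrite -natr_sum -sum1dep_card [in RHS]big_mkcond. Qed.

Lemma sum_enum_val (T : finType) (R : nmodType) (F : T -> R) :
  \sum_(i < #|T|) F (enum_val i) = \sum_(z : T) F z.
Proof. by rewrite -(big_enum_val (A := T)). Qed.

Section AdjacencyMatrix.
Variables (F : fieldType) (T : finType) (e : rel T).
Local Notation N x := [set y | e x y].
Local Notation J := (const_mx 1 : 'M[F]_#|T|).

Definition adjmx : 'M[F]_#|T| := \matrix_(i, j) (e (enum_val i) (enum_val j))%:R.

Lemma adjmx_diag : irreflexive e -> forall i, adjmx i i = 0.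
Proof. by move=> irr i; rewrite mxE irr. Qed.

Lemma adjmx_01 i j : (adjmx i j == 0) || (adjmx i j == 1).
Proof. by rewrite mxE; case: (e _ _); rewrite eqxx ?orbT. Qed.

Lemma adjmx_mul_const1 k : (forall x, #|N x| = k) -> adjmx *m J = k%:R *: J.
Proof.
move=> Nk; apply/matrixP => i j; rewrite !mxE.
under eq_bigr do rewrite !mxE mulr1.
by rewrite (sum_enum_val (fun z => (e (enum_val i) z)%:R)) sum_nat_of_bool Nk mulr1.
Qed.

Lemma const1_mul_adjmx k :
  symmetric e -> (forall x, #|N x| = k) -> J *m adjmx = k%:R *: J.
Proof.
move=> sym Nk; apply/matrixP => i j; rewrite !mxE.
under eq_bigr do rewrite !mxE mul1r sym.
by rewrite (sum_enum_val (fun z => (e (enum_val j) z)%:R)) sum_nat_of_bool Nk mulr1.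
Qed.

Lemma adjmx_sqrE : symmetric e ->
  forall i j, (adjmx *m adjmx) i j = #|N (enum_val i) :&: N (enum_val j)|%:R.
Proof.
move=> sym i j; rewrite mxE.
under eq_bigr do rewrite !mxE -natrM mulnb [e _ (enum_val j)]sym.
rewrite (sum_enum_val (fun z => (e (enum_val i) z && e (enum_val j) z)%:R)).
rewrite sum_nat_of_bool.
by congr (_%:R); apply: eq_card => z; rewrite !inE.
Qed.

Lemma srg_adjmx_sqr v k lam mu : srg e v k lam mu ->
  adjmx *m adjmx = (k%:R - mu%:R) *: 1%:M + (lam%:R - mu%:R) *: adjmx + mu%:R *: J.
Proof.
move=> G; case: (G) => [[sym irr] _ Nk [Glam Gmu _ _]].
apply/matrixP => i j; rewrite adjmx_sqrE // !mxE.
have [<-|ij] := eqVneq i j.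
  by rewrite irr finset.setIid Nk mulr1 mulr0 addr0 mulr1; ring.
have xy : enum_val i != enum_val j by apply: contra ij => /eqP /enum_val_inj ->.
rewrite -common_nbrsE mulr0 add0r mulr1.
case exy: (e (enum_val i) (enum_val j)).
  by rewrite (Glam _ _ xy exy) /=; ring.
by rewrite (Gmu _ _ xy (negbT exy)) /=; ring.
Qed.
End AdjacencyMatrix.


Lemma ltr_powR_ratio (R : realType) (x y : R) (p q : nat) :
  0 <= x -> 0 <= y -> (0 < q)%N -> x ^+ q < y ^+ p -> x < y `^ (p%:R / q%:R).
Proof.
move=> x_ge0 y_ge0 q_gt0 xy; rewrite ltNge; apply/negP => le_x.
have : (y `^ (p%:R / q%:R)) ^+ q <= x ^+ q by rewrite lerXn2r ?nnegrE // powR_ge0.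
rewrite -powR_mulrn ?powR_ge0 // -powRrM mulfVK ?pnatr_eq0 -?lt0n //.
by rewrite powR_mulrn // leNgt xy.
Qed.

Theorem corollary1p4 (R : realType) (T : finType) (e : rel T)
    (v k lam mu : nat) :
  primitive_srg e v k lam mu ->
  `|(lam%:R : R) - mu%:R| < (v%:R : R) `^ (3 / 4).
Proof.
move=> [G conn connC]; case: (G) => [[sym irr] <- Nk _].
have mu_lt_k : mu%:R < k%:R :> R by rewrite ltr_nat (srg_mu_lt_k G).
have k_neq : k%:R != lam%:R + 1 :> R by rewrite natr1 eqr_nat (srg_k_neq_lam_succ G).
have := srg_adjacency_bound (srg_adjmx_sqr R G) (adjmx_mul_const1 R Nk)
  (const1_mul_adjmx R sym Nk) (adjmx_diag R irr) (fun i j _ => adjmx_01 R e i j)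
  (srg_card_ge2 G) mu_lt_k k_neq.
by apply: ltr_powR_ratio.
Qed.
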